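(* Let $\mathbb G$ be a special 2-group and $(n,\rho,\beta,c)$, $(n',\rho',\beta',c')$ admissible quadruples. If $(\mathbf R,s):n\to n'$ is the 1-morphism of $\mathbf{2Mat}_{\mathbb C}$ underlying a 1-intertwiner $\mathcal F(n,\rho,\beta,c)\to\mathcal F(n',\rho',\beta',c')$, then (i) $\mathbf R$ is $(\rho,\rho')$-invariant, i.e. $R_{\rho'(g)(i'),\rho(g)(i)}=R_{i'i}$ for all $i',i$ and $g\in\pi_0(\mathbb G)$; and (ii) $\mathrm{Sup}(\mathbf R)\subseteq I(\beta,\beta')$. In particular the support of any 1-intertwiner is a union of intertwining $\pi_0(\mathbb G)$-orbits of $M(n',n)$. Consequently, if $I(\beta,\beta')=\emptyset$, the category of 1-intertwiners and 2-intertwiners from $\mathcal F(n,\rho,\beta,c)$ to $\mathcal F(n',\rho',\beta',c')$ is terminal.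
   Context: A special 2-group $\mathbb G$: skeletal monoidal groupoid, strictly invertible objects, $l,r$ identities; objects form $\pi_0(\mathbb G)$; $\pi_1(\mathbb G)=\mathrm{Aut}(e)$ is a $\pi_0(\mathbb G)$-module via $g\cdot u=\gamma_g^{-1}(\delta_g(u))$, $\gamma_g(u)=u\otimes\mathrm{id}_g$, $\delta_g(u)=\mathrm{id}_g\otimes u$; canonical 3-cocycle $\alpha(g_1,g_2,g_3)=\gamma^{-1}_{g_1g_2g_3}(a_{g_1,g_2,g_3})$. $\mathbf{2Mat}_{\mathbb C}$: objects $n\ge0$; for $n,m\ge1$ a 1-morphism $n\to m$ is $(\mathbf R,s)$, $\mathbf R$ an $m\times n$ matrix over $\mathbb N$, $s=(s_i)$ a gauge with $s_i(\mathbf a)\in GL((\mathbf R\mathbf a)_i,\mathbb C)$ for $\mathbf a\in\mathbb N^n$ ($=1$ if $(\mathbf R\mathbf a)_i=0$), $s_i(\mathbf e_j)=\mathbf I_{R_{ij}}$; a 2-morphism $(\mathbf R,s)\Rightarrow(\mathbf R',s')$ is an $m\times n$ array with $(i,j)$ entry an $R'_{ij}\times R_{ij}$ complex matrix if $R_{ij},R'_{ij}\ne0$, empty otherwise; vertical composition entrywise product; composition $(\tilde{\mathbf R},\tilde s)\circ(\mathbf R,s)=(\tilde{\mathbf R}\mathbf R,\tilde s\ast s)$, $(\tilde s\ast s)_k(\mathbf a)=\tilde s_k(\mathbf R\mathbf a)\big(\bigoplus_{i}\mathbf I_{\tilde R_{ki}}\otimes s_i(\mathbf a)\big)\mathbf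 P(\tilde{\mathbf R}_k,\mathbf R,\mathbf a)\big(\bigoplus_j \tilde s_k(\mathbf R\mathbf e_j)^{-1}\otimes\mathbf I_{a_j}\big)$, $\mathbf P(\cdot)$ fixed permutation matrices of the construction (identities when $\tilde{\mathbf R}_k$ or $\mathbf a$ is a standard basis vector, $\mathbf R$ an identity, or $\mathbf R$ one column); horizontal composition $(\tilde{\mathsf T}\circ\mathsf T)_{kj}=\tilde s'_k(\mathbf R'\mathbf e_j)\big(\bigoplus_i\tilde{\mathsf T}_{ki}\otimes\mathsf T_{ij}\big)\tilde s_k(\mathbf R\mathbf e_j)^{-1}$; identities $(\mathbf I_n,\mathbf I)$ with trivial gauge $\mathbf I$. Representations: a 2-matrix representation is $(n,\mathbb F)$ with $\mathbb F=(F,F_2,F_0):\mathbb G\to\mathsf{Equiv}_{\mathbf{2Mat}_{\mathbb C}}(n)$ monoidal; a 1-intertwiner $(n,\mathbb F)\to(n',\mathbb F')$ is $(f,\Phi)$, $f:n\to n'$, invertible $\Phi(A):F'(A)\circ f\Rightarrow f\circ F(A)$ natural in $A$, with $\Phi(A\otimes B)\cdot(F'_2(A,B)\circ1_f)=(1_f\circ F_2(A,B))\cdot(\Phi(A)\circ1_{F(B)})\cdot(1_{F'(A)}\circ\Phi(B))$ and $F'_0\circ1_f=(1_f\circ F_0)\cdot\Phi(I)$; a 2-intertwiner $(f,\Phi)\Rightarrow(g,\Psi)$ is $\tau:f\Rightarrow g$ with $\Psi(A)\cdot(1_{F'(A)}\circ\tau)=(\tau\circ1_{F(A)})\cdot\Phi(A)$.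 $\mathbf P(\sigma)_{ij}=\delta_{i,\sigma(j)}$; $(\sigma\cdot\boldsymbol\lambda)_i=\lambda_{\sigma^{-1}(i)}$. Admissible quadruple $(n,\rho,\beta,c)$: $n\ge1$, $\rho:\pi_0(\mathbb G)\to S_n$ homomorphism, $\beta:\pi_1(\mathbb G)\to(\mathbb C^* )^n_\rho$ module homomorphism with $[\beta\circ\alpha]=0$, $c$ normalized 2-cochain in $(\mathbb C^* )^n_\rho$ with $\partial c=\beta\circ\alpha$. $\mathcal F(n,\rho,\beta,c)=(n,\mathbb F)$ with $F(g)=(\mathbf P(\rho(g)),\mathbf I)$, $F(\varphi)$ for $\varphi\in\mathrm{Aut}(g)$ having only nonempty entries $\beta(\gamma_g^{-1}\varphi)_{\rho(g)(j)}$ at $(\rho(g)(j),j)$, $F_2(g_1,g_2)$ with only nonempty entries $c(g_1,g_2)_{\rho(g_1g_2)(j)}$ at $(\rho(g_1g_2)(j),j)$, $F_0$ identity. $M(n',n)=\{1..n'\}\times\{1..n\}$, right action $(i',i)\cdot g=(\rho'(g)^{-1}(i'),\rho(g)^{-1}(i))$; $I(\beta,\beta')=\{(i',i):\beta'_{i'}=\beta_i\}$; an orbit is intertwining if contained in $I(\beta,\beta')$; $\mathrm{Sup}(\mathbf R)=\{(i',i):R_{i'i}\ne0\}$. A category is terminal if it has one object and one morphism. *)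

From HB Require Import structures.
From mathcomp Require Import all_boot all_order all_algebra all_fingroup.
From mathcomp Require Import complex mxtens Rstruct.
From Stdlib Require Import Rdefinitions ClassicalEpsilon FunctionalExtensionality.

Set Implicit Arguments.
Unset Strict Implicit.
Unset Printing Implicit Defensive.


Definition CC : Type := (Rdefinitions.R)[i].

(* A skeletal groupoid: every morphism is an automorphism of its object
   [src phi] (Hom(g,h) is empty for g <> h).  The tensor product is a
   bifunctor [tens], the associator [assoc x y z] is an automorphism of
   (xy)z, natural, satisfying the pentagon; the unitors l, r are
   identities (strict unit laws [tens1f], [tensf1] and the triangle axiom,
   which with l = r = id reads a_{x,e,y} = id).                            *)
Record Special2Group := {
  obj : Type;
  omul : obj -> obj -> obj;
  oe : obj;
  oinv : obj -> obj;
  omulA : forall x y z, omul x (omul y z) = omul (omul x y) z;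
  omul1g : forall x, omul oe x = x;
  omulg1 : forall x, omul x oe = x;
  omulVg : forall x, omul (oinv x) x = oe;
  omulgV : forall x, omul x (oinv x) = oe;
  mor : Type;
  src : mor -> obj;
  mcmp : mor -> mor -> mor;
  mid : obj -> mor;
  minv : mor -> mor;
  tens : mor -> mor -> mor;
  assoc : obj -> obj -> obj -> mor;     (* a_{x,y,z} : (xy)z -> x(yz)   *)
  src_cmp : forall f g, src g = src f -> src (mcmp f g) = src f;
  src_id : forall x, src (mid x) = x;
  src_inv : forall f, src (minv f) = src f;
  src_tens : forall f g, src (tens f g) = omul (src f) (src g);
  src_assoc : forall x y z, src (assoc x y z) = omul (omul x y) z;
  mcmpA : forall f g h, src g = src f -> src h = src f ->
    mcmp f (mcmp g h) = mcmp (mcmp f g) h;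
  mcmp1f : forall f, mcmp (mid (src f)) f = f;
  mcmpf1 : forall f, mcmp f (mid (src f)) = f;
  mcmpVf : forall f, mcmp (minv f) f = mid (src f);
  mcmpfV : forall f, mcmp f (minv f) = mid (src f);
  tens_cmp : forall f f' g g', src f' = src f -> src g' = src g ->
    tens (mcmp f f') (mcmp g g') = mcmp (tens f g) (tens f' g');
  tens_id : forall x y, tens (mid x) (mid y) = mid (omul x y);
  tens1f : forall f, tens (mid oe) f = f;
  tensf1 : forall f, tens f (mid oe) = f;
  assoc_nat : forall f g h,
    mcmp (assoc (src f) (src g) (src h)) (tens (tens f g) h)
    = mcmp (tens f (tens g h)) (assoc (src f) (src g) (src h));
  pentagon : forall w x y z,
    mcmp (tens (mid w) (assoc x y z))
         (mcmp (assoc w (omul x y) z) (tens (assoc w x y) (mid z)))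
    = mcmp (assoc w x (omul y z)) (assoc (omul w x) y z);
  triangle : forall x y, assoc x oe y = mid (omul x y)
}.

Arguments oe : clear implicits.

Section TwoGroup.
Variable G : Special2Group.

Definition in_pi1 (u : mor G) : Prop := src u = oe G.

Definition gammaInv (g : obj G) (phi : mor G) : mor G :=
  epsilon (inhabits (mid (oe G)))
          (fun u => in_pi1 u /\ tens u (mid g) = phi).

Definition pi1_act (g : obj G) (u : mor G) : mor G :=
  gammaInv g (tens (mid g) u).

Definition alpha3 (x y z : obj G) : mor G :=
  gammaInv (omul (omul x y) z) (assoc x y z).

End TwoGroup.

(* 2Mat_C.  nat-matrices are functions; [nmat m n] is an m x n matrix,
   i.e. the matrix part of a 1-morphism n -> m.                          *)
Definition nmat (m n : nat) := 'I_m -> 'I_n -> nat.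
Definition nvec (n : nat) := 'I_n -> nat.

Definition matapp m n (A : nmat m n) (a : nvec n) : nvec m :=
  fun i => (\sum_(j < n) A i j * a j)%nat.
Definition mmul l m n (A : nmat l m) (B : nmat m n) : nmat l n :=
  fun k j => (\sum_(i < m) A k i * B i j)%nat.
Definition colv m n (B : nmat m n) (j : 'I_n) : nvec m := fun i => B i j.
Definition unitv n (j : 'I_n) : nvec n := fun i => nat_of_bool (i == j).
Definition idmat n : nmat n n := fun i j => nat_of_bool (i == j).
Arguments idmat : clear implicits.
Definition permmat n (s : {perm 'I_n}) : nmat n n :=
  fun i j => nat_of_bool (i == s j).

Lemma mmulA l m n p (A : nmat l m) (B : nmat m n) (C : nmat n p) :
  mmul (mmul A B) C = mmul A (mmul B C).
Proof.
apply: functional_extensionality => k; apply: functional_extensionality => j.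
rewrite /mmul.
under eq_bigr => i _ do rewrite big_distrl.
rewrite exchange_big /=; apply: eq_bigr => i _; rewrite big_distrr /=.
by apply: eq_bigr => r _; rewrite mulnA.
Qed.

Lemma mmul1l m n (A : nmat m n) : mmul (idmat m) A = A.
Proof.
apply: functional_extensionality => k; apply: functional_extensionality => j.
rewrite /mmul /idmat (bigD1 k) //= eqxx big1 ?addn0; first exact: mul1n.
by move=> i /negPf; rewrite eq_sym => ->.
Qed.

Lemma mmul1r m n (A : nmat m n) : mmul A (idmat n) = A.
Proof.
apply: functional_extensionality => k; apply: functional_extensionality => j.
rewrite /mmul /idmat (bigD1 j) //= eqxx big1 ?addn0; first exact: muln1.
by move=> i /negPf ->; rewrite muln0.
Qed.

Lemma matapp_mmul l m n (A : nmat l m) (B : nmat m n) (a : nvec n) k :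
  matapp A (matapp B a) k = matapp (mmul A B) a k.
Proof.
rewrite /matapp /mmul.
under eq_bigr => i _ do rewrite big_distrr.
rewrite exchange_big /=; apply: eq_bigr => j _; rewrite big_distrl /=.
by apply: eq_bigr => r _; rewrite mulnA.
Qed.

Import GRing.Theory.
Local Open Scope ring_scope.

Record onemor (m n : nat) := OneMor {
  mR : nmat m n;
  mS : forall (i : 'I_m) (a : nvec n), 'M[CC]_(matapp mR a i)
}.

Definition gauge_ok m n (f : onemor m n) : Prop :=
  (forall i a, mS f i a \in unitmx) /\
  (forall i j, mS f i (unitv j) = 1%:M).

Definition trivg m n (R : nmat m n) : forall i a, 'M[CC]_(matapp R a i) :=
  fun i a => 1%:M.

Definition Idm n : onemor n n := OneMor (@trivg n n (idmat n)).
Arguments Idm : clear implicits.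

Definition bdiag m (p q : 'I_m -> nat) (D : forall i, 'M[CC]_(p i, q i)) :
    'M[CC]_((\sum_i p i)%nat, (\sum_i q i)%nat) :=
  mxblock (fun i i' : 'I_m =>
    match i =P i' with
    | ReflectT e => castmx (erefl (p i), f_equal q e) (D i)
    | ReflectF _ => 0
    end).

(* The "fixed permutation matrices" P(R~_k, R, a) of the construction of
   2Mat_C are not specified; we take them as a parameter. *)
Definition Pfam :=
  forall (l m n : nat) (Rt : nmat l m) (R : nmat m n) (k : 'I_l) (a : nvec n),
    'M[CC]_(matapp Rt (matapp R a) k, matapp (mmul Rt R) a k).

Definition is_permmx p q (M : 'M[CC]_(p, q)) : Prop :=
  exists f : 'I_q -> 'I_p, bijective f /\ forall r c, M r c = (r == f c)%:R.
Definition is_idmx p q (M : 'M[CC]_(p, q)) : Prop :=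
  forall (r : 'I_p) (c : 'I_q), M r c = ((r : nat) == c)%:R.
Definition is_stdbasis n (a : nvec n) : Prop :=
  exists j : 'I_n, forall i, a i = nat_of_bool (i == j).

Definition Pfam_ok (P : Pfam) : Prop :=
  forall l m n (Rt : nmat l m) (R : nmat m n) k a,
    is_permmx (P l m n Rt R k a) /\
    (is_stdbasis (Rt k) \/ is_stdbasis a \/
     (m = n /\ forall i j, R i j = nat_of_bool ((i : nat) == j)) \/ n = 1%nat ->
     is_idmx (P l m n Rt R k a)).

Definition comp (P : Pfam) l m n (Ft : onemor l m) (F : onemor m n) : onemor l n :=
  @OneMor l n (mmul (mR Ft) (mR F)) (fun k a =>
    castmx (matapp_mmul (mR Ft) (mR F) a k, erefl _)
      (mS Ft k (matapp (mR F) a)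
       *m bdiag (p := fun i => (mR Ft k i * matapp (mR F) a i)%nat)
                (q := fun i => (mR Ft k i * matapp (mR F) a i)%nat)
                (fun i => tensmx (1%:M : 'M[CC]_(mR Ft k i)) (mS F i a))
       *m P l m n (mR Ft) (mR F) k a
       *m bdiag (p := fun j => (mmul (mR Ft) (mR F) k j * a j)%nat)
                (q := fun j => (mmul (mR Ft) (mR F) k j * a j)%nat)
                (fun j => tensmx (invmx (mS Ft k (colv (mR F) j)))
                                 (1%:M : 'M[CC]_(a j))))).

Arguments comp P {l m n} Ft F.

Definition Two m n (R R' : nmat m n) := forall i j, 'M[CC]_(R' i j, R i j).

Definition vcomp m n (R1 R2 R3 : nmat m n) (T' : Two R2 R3) (T : Two R1 R2) :
  Two R1 R3 := fun i j => T' i j *m T i j.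

Definition id2 m n (R : nmat m n) : Two R R := fun i j => 1%:M.

Definition inv2 m n (R R' : nmat m n) (T : Two R R') : Prop :=
  exists T' : Two R' R, vcomp T' T = id2 R /\ vcomp T T' = id2 R'.

Definition cast2 m n (R1 R1' R2 R2' : nmat m n) (e1 : R1 = R1') (e2 : R2 = R2')
  (T : Two R1 R2) : Two R1' R2' :=
  match e1 in _ = X1, e2 in _ = X2 return Two X1 X2 with
  | erefl, erefl => T end.

Definition hcomp l m n (Ft Ft' : onemor l m) (F F' : onemor m n)
  (Tt : Two (mR Ft) (mR Ft')) (T : Two (mR F) (mR F')) :
  Two (mmul (mR Ft) (mR F)) (mmul (mR Ft') (mR F')) :=
  fun k j =>
    mS Ft' k (colv (mR F') j)
    *m bdiag (p := fun i => (mR Ft' k i * mR F' i j)%nat)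
             (q := fun i => (mR Ft k i * mR F i j)%nat)
             (fun i => tensmx (Tt k i) (T i j))
    *m invmx (mS Ft k (colv (mR F) j)).
Arguments hcomp {l m n} Ft Ft' F F' Tt T.

(* rectangular "scalar" matrix: a on the diagonal (used for 1x1 / empty) *)
Definition rectsc p q (a : CC) : 'M[CC]_(p, q) :=
  \matrix_(r, c) (if (r : nat) == c then a else 0).

Record quad (G : Special2Group) (n : nat) := Quad {
  qrho : obj G -> {perm 'I_n};
  qbeta : mor G -> 'I_n -> CC;        (* meaningful on pi_1 = Aut(e) *)
  qc : obj G -> obj G -> 'I_n -> CC
}.

Section Quad.
Variables (G : Special2Group) (n : nat).

Definition cobound2 (rho : obj G -> {perm 'I_n})
    (c : obj G -> obj G -> 'I_n -> CC) (x y z : obj G) (i : 'I_n) : CC :=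
  c y z (((rho x)^-1)%g i) * c x (omul y z) i / (c (omul x y) z i * c x y i).

Definition normalized_cochain2 (c : obj G -> obj G -> 'I_n -> CC) : Prop :=
  (forall x y i, c x y i != 0) /\
  (forall x i, c (oe G) x i = 1 /\ c x (oe G) i = 1).

Definition admissible (q : quad G n) : Prop :=
  (0 < n)%nat /\
  (forall x y i, qrho q (omul x y) i = qrho q x (qrho q y i)) /\
  (forall u i, in_pi1 u -> qbeta q u i != 0) /\
  (forall u v i, in_pi1 u -> in_pi1 v ->
     qbeta q (mcmp u v) i = qbeta q u i * qbeta q v i) /\
  (forall x u i, in_pi1 u ->
     qbeta q (pi1_act x u) i = qbeta q u (((qrho q x)^-1)%g i)) /\
  (* [beta o alpha] = 0 *)
  (exists c', normalized_cochain2 c' /\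
     forall x y z i, cobound2 (qrho q) c' x y z i = qbeta q (alpha3 x y z) i) /\
  normalized_cochain2 (qc q) /\
  (forall x y z i, cobound2 (qrho q) (qc q) x y z i = qbeta q (alpha3 x y z) i).

Definition Fobj (q : quad G n) (x : obj G) : onemor n n :=
  OneMor (@trivg n n (permmat (qrho q x))).

(* F(phi), phi in Aut(g): entry beta(gamma_g^{-1} phi)_{rho(g)(j)} at
   (rho(g)(j), j), empty elsewhere *)
Definition Fmor (q : quad G n) (phi : mor G) :
  Two (permmat (qrho q (src phi))) (permmat (qrho q (src phi))) :=
  fun i j => (qbeta q (gammaInv (src phi) phi) i)%:M.

Definition F2 (q : quad G n) (x y : obj G) :
  Two (mmul (permmat (qrho q x)) (permmat (qrho q y)))
      (permmat (qrho q (omul x y))) :=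
  fun i j => rectsc _ _ (qc q x y i).

Definition F0 (q : quad G n) : Two (idmat n) (permmat (qrho q (oe G))) :=
  fun i j => rectsc _ _ 1.

End Quad.

Section Intertwiners.
Variables (P : Pfam) (G : Special2Group) (n n' : nat)
          (q : quad G n) (q' : quad G n').

Definition PhiType (f : onemor n' n) :=
  forall x : obj G,
    Two (mmul (permmat (qrho q' x)) (mR f)) (mmul (mR f) (permmat (qrho q x))).

Definition is1int (f : onemor n' n) (Phi : PhiType f) : Prop :=
  gauge_ok f /\
  (forall x, inv2 (Phi x)) /\
  (forall phi : mor G,
     vcomp (Phi (src phi))
       (hcomp (Fobj q' (src phi)) (Fobj q' (src phi)) f f
              (Fmor q' phi) (id2 (mR f)))
     = vcomp (hcomp f f (Fobj q (src phi)) (Fobj q (src phi))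
                    (id2 (mR f)) (Fmor q phi))
             (Phi (src phi))) /\
  (forall x y : obj G,
     vcomp (Phi (omul x y))
       (hcomp (comp P (Fobj q' x) (Fobj q' y)) (Fobj q' (omul x y)) f f
              (F2 q' x y) (id2 (mR f)))
     = vcomp (hcomp f f (comp P (Fobj q x) (Fobj q y)) (Fobj q (omul x y))
                    (id2 (mR f)) (F2 q x y))
         (vcomp
           (cast2 (erefl _) (mmulA (mR f) _ _)
              (hcomp (comp P (Fobj q' x) f) (comp P f (Fobj q x))
                     (Fobj q y) (Fobj q y) (Phi x) (id2 _)))
           (cast2 (esym (mmulA _ _ (mR f))) (esym (mmulA _ (mR f) _))
              (hcomp (Fobj q' x) (Fobj q' x)
                     (comp P (Fobj q' y) f) (comp P f (Fobj q y))
                     (id2 _) (Phi y))))) /\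
  (cast2 (etrans (mmul1l (mR f)) (esym (mmul1r (mR f)))) (erefl _)
     (vcomp (Phi (oe G))
        (hcomp (Idm n') (Fobj q' (oe G)) f f (F0 q') (id2 (mR f))))
   = hcomp f f (Idm n) (Fobj q (oe G)) (id2 (mR f)) (F0 q)).

Record Int1 := MkInt1 {
  i_f : onemor n' n;
  i_Phi : PhiType i_f;
  i_ok : is1int i_Phi
}.

Definition is2int (X Y : Int1) (tau : Two (mR (i_f X)) (mR (i_f Y))) : Prop :=
  forall x : obj G,
    vcomp (i_Phi Y x)
      (hcomp (Fobj q' x) (Fobj q' x) (i_f X) (i_f Y) (id2 _) tau)
    = vcomp (hcomp (i_f X) (i_f Y) (Fobj q x) (Fobj q x) tau (id2 _))
            (i_Phi X x).

Definition int_category_terminal : Prop :=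
  (exists X : Int1, forall Y : Int1, Y = X) /\
  (forall X Y : Int1, exists tau, @is2int X Y tau /\
      forall tau', @is2int X Y tau' -> tau' = tau).

Definition Ibb (i' : 'I_n') (i : 'I_n) : Prop :=
  forall u, in_pi1 u -> qbeta q' u i' = qbeta q u i.

Definition Mact (p : 'I_n' * 'I_n) (x : obj G) : 'I_n' * 'I_n :=
  (((qrho q' x)^-1)%g p.1, ((qrho q x)^-1)%g p.2).
Definition Morbit (p : 'I_n' * 'I_n) : 'I_n' * 'I_n -> Prop :=
  fun p' => exists x, p' = Mact p x.
Definition intertwining_orbit (p : 'I_n' * 'I_n) : Prop :=
  forall p', Morbit p p' -> Ibb p'.1 p'.2.

Definition Sup (R : nmat n' n) (p : 'I_n' * 'I_n) : Prop := R p.1 p.2 <> 0%nat.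

End Intertwiners.

(* Φ(g) is an invertible 2-morphism F'(g) ∘ f ⇒ f ∘ F(g), so its blocks are
   square; comparing the sizes R_{ρ'(g)i',ρ(g)i} and R_{i'i} of the two sides
   gives invariance of R.  For u ∈ π₁ both F(u) and F'(u) are scalar, and
   conjugating a scalar block by the gauge of f leaves it unchanged, so
   naturality at u reads Φ(e)_{i'i} β'(u)_{i'} = β(u)_i Φ(e)_{i'i}; as Φ(e)_{i'i}
   is invertible and non-empty on the support, β'(u)_{i'} = β(u)_i there.  If
   I(β,β') is empty, every 1-intertwiner thus has R = 0: all of its data are
   empty matrices, and the category of intertwiners collapses to a point. *)

From mathcomp Require Import all_boot all_order all_algebra all_fingroup.
From mathcomp Require Import complex mxtens Rstruct.
From Stdlib Require Import ClassicalEpsilon FunctionalExtensionality ProofIrrelevance.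

Set Implicit Arguments.
Unset Strict Implicit.
Unset Printing Implicit Defensive.

Import GRing.Theory.
Local Open Scope ring_scope.

Lemma mx_nrows0_eq (R : Type) m n (A B : 'M[R]_(m, n)) : m = 0%N -> A = B.
Proof. by move=> m0; subst m; apply/matrixP => -[]. Qed.

Lemma tensmx_scalar (R : comPzRingType) m n (x y : R) :
  tensmx (x%:M : 'M_m) (y%:M : 'M_n) = (x * y)%:M.
Proof.
apply/matrixP => i j.
case: (mxtens_indexP i) => i0 i1; case: (mxtens_indexP j) => j0 j1.
rewrite tensmxE !mxE (inj_eq (can_inj (@mxtens_indexK m n))) xpair_eqE.
by case: (i0 == j0); case: (i1 == j1); rewrite ?mulr1n ?mulr0n ?mulr0 ?mul0r.
Qed.

Lemma mx_inverse_square (F : fieldType) m n (A : 'M[F]_(m, n)) (B : 'M[F]_(n, m)) :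
  B *m A = 1%:M -> A *m B = 1%:M -> m = n.
Proof.
move=> BA1 AB1; apply/eqP; rewrite eqn_leq.
have rkB := mxrankM_maxl B A; rewrite BA1 mxrank1 in rkB.
have rkA := mxrankM_maxl A B; rewrite AB1 mxrank1 in rkA.
by rewrite (leq_trans rkA (rank_leq_col A)) (leq_trans rkB (rank_leq_col B)).
Qed.

Lemma conj_scalar_mx (F : comUnitRingType) N (A : 'M[F]_N) (c : F) :
  A \in unitmx -> A *m c%:M *m invmx A = c%:M.
Proof. by move=> Aunit; rewrite scalar_mxC -mulmxA mulmxV ?mulmx1. Qed.

Lemma bdiag_scalar m (p : 'I_m -> nat) (D : forall i, 'M[CC]_(p i, p i)) (c : CC) :
  (forall i, p i != 0%N -> D i = c%:M) -> bdiag (p := p) (q := p) D = c%:M.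
Proof.
move=> Dc; rewrite -(mxdiagZ (p_ := p)) /bdiag /mxdiag; apply/eq_mxblock => i i'.
case: (i =P i') => [e|//]; subst i'; rewrite castmx_id conform_mx_id.
by case: (eqVneq (p i) 0%N) => [/mx_nrows0_eq|/Dc].
Qed.

Definition nmat0 {m n} : nmat m n := fun _ _ => 0%N.

Lemma mmul0m l m n (A : nmat l m) (B : nmat m n) : A =2 nmat0 -> mmul A B =2 nmat0.
Proof. by move=> A0 i j; rewrite /mmul big1 // => k _; rewrite A0 mul0n. Qed.

Lemma mmulm0 l m n (A : nmat l m) (B : nmat m n) : B =2 nmat0 -> mmul A B =2 nmat0.
Proof. by move=> B0 i j; rewrite /mmul big1 // => k _; rewrite B0 muln0. Qed.

Section NatMatrices.
Variables m n : nat.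

Lemma mmul_permmatl (s : {perm 'I_m}) (R : nmat m n) i j :
  mmul (permmat s) R i j = R ((s^-1)%g i) j.
Proof.
rewrite /mmul /permmat (bigD1 ((s^-1)%g i)) //= permKV eqxx mul1n big1 ?addn0 //.
by move=> k /negPf kNi; case: eqP => // e; move: kNi; rewrite e permK eqxx.
Qed.

Lemma mmul_permmatr (s : {perm 'I_n}) (R : nmat m n) i j :
  mmul R (permmat s) i j = R i (s j).
Proof.
rewrite /mmul /permmat (bigD1 (s j)) //= eqxx muln1 big1 ?addn0 //.
by move=> k /negPf ->; rewrite muln0.
Qed.

Lemma Two_eq_target0 (A B : nmat m n) (T1 T2 : Two A B) : B =2 nmat0 -> T1 = T2.
Proof.
move=> B0; apply: functional_extensionality_dep => i.
by apply: functional_extensionality_dep => j; apply: mx_nrows0_eq; rewrite B0.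
Qed.

Lemma inv2_dims (A B : nmat m n) (T : Two A B) : inv2 T -> B =2 A.
Proof.
case=> T' [T'T TT'] i j.
apply: (@mx_inverse_square _ _ _ (T i j) (T' i j)).
  exact: (congr1 (fun S => S i j) T'T).
exact: (congr1 (fun S => S i j) TT').
Qed.

Lemma inv2_entry0 (A B : nmat m n) (T : Two A B) i j :
  inv2 T -> T i j = 0 -> A i j = 0%N.
Proof.
case=> T' [T'T _] Tij0.
have := congr1 (fun S => mxrank (S i j)) T'T.
by rewrite /vcomp /id2 /= Tij0 mulmx0 mxrank0 mxrank1.
Qed.

End NatMatrices.

Lemma gammaInv_pi1 G (u : mor G) : in_pi1 u -> gammaInv (src u) u = u.
Proof.
move=> u1; rewrite /gammaInv; set P := fun v => _.
have [] : P (epsilon (inhabits (mid (oe G))) P).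
  by apply: epsilon_spec; exists u; rewrite /P u1 tensf1.
by rewrite u1 tensf1.
Qed.

Lemma admissible_rho1 G n (q : quad G n) : admissible q -> qrho q (oe G) =1 id.
Proof.
case=> _ [rhoM _] i; apply: (@perm_inj _ (qrho q (oe G))).
by rewrite -rhoM omul1g.
Qed.

Section Naturality.
Variables (G : Special2Group) (n n' : nat) (q : quad G n) (q' : quad G n').
Variables (f : onemor n' n) (u : mor G).
Hypothesis u_pi1 : in_pi1 u.

Lemma hcomp_Fmor_id2 i' i :
  hcomp (Fobj q' (src u)) (Fobj q' (src u)) f f (Fmor q' u) (id2 (mR f)) i' i
  = (qbeta q' u i')%:M.
Proof.
rewrite /hcomp /trivg invmx1 mul1mx mulmx1; apply: bdiag_scalar => k _.
by rewrite /Fmor /id2 tensmx_scalar mulr1 gammaInv_pi1.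
Qed.

Lemma hcomp_id2_Fmor i' i :
  admissible q -> gauge_ok f ->
  hcomp f f (Fobj q (src u)) (Fobj q (src u)) (id2 (mR f)) (Fmor q u) i' i
  = (qbeta q u i)%:M.
Proof.
move=> qadm [S_unit _]; rewrite /hcomp (@bdiag_scalar _ _ _ (qbeta q u i)).
  by rewrite conj_scalar_mx.
move=> k; rewrite /Fmor /id2 tensmx_scalar mul1r gammaInv_pi1 //= /permmat.
have -> : qrho q (src u) i = i by rewrite u_pi1 admissible_rho1.
by case: (k =P i) => [->|_]; rewrite ?muln0.
Qed.

End Naturality.

Section OneIntertwiners.
Variables (P : Pfam) (G : Special2Group) (n n' : nat).
Variables (q : quad G n) (q' : quad G n').

Lemma is1int_invariant (f : onemor n' n) (Phi : PhiType q q' f) :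
  is1int P Phi -> forall x i' i, mR f (qrho q' x i') (qrho q x i) = mR f i' i.
Proof.
case=> _ [Phi_inv _] x i' i.
have := inv2_dims (Phi_inv x) (qrho q' x i') i.
by rewrite mmul_permmatl mmul_permmatr permK.
Qed.

Lemma is1int_Sup_Ibb (f : onemor n' n) (Phi : PhiType q q' f) :
  admissible q -> admissible q' -> is1int P Phi ->
  forall i' i, Sup (mR f) (i', i) -> Ibb q q' i' i.
Proof.
move=> qadm q'adm [gauge [Phi_inv [Phi_nat _]]] i' i Rii' u u_pi1.
have := congr1 (fun T => T i' i) (Phi_nat u).
rewrite /vcomp hcomp_Fmor_id2 // hcomp_id2_Fmor // mul_mx_scalar mul_scalar_mx.
move/eqP; rewrite -subr_eq0 -scalerBl scaler_eq0 subr_eq0.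
case/orP => [/eqP //|/eqP Phi0]; case: Rii'.
have rho'1 k : qrho q' (src u) k = k by rewrite u_pi1 admissible_rho1.
have := inv2_entry0 (Phi_inv (src u)) Phi0.
by rewrite mmul_permmatl -(rho'1 ((qrho q' (src u))^-1 i')%g) permKV.
Qed.

Lemma is1int_Sup_Morbit (f : onemor n' n) (Phi : PhiType q q' f) p p' :
  is1int P Phi -> Sup (mR f) p -> Morbit q q' p p' -> Sup (mR f) p'.
Proof.
move=> f_int Rp [x ->]; rewrite /Sup /Mact /=.
by rewrite -(is1int_invariant f_int x) !permKV.
Qed.

Definition onemor0 : onemor n' n := @OneMor n' n nmat0 (fun _ _ => 1%:M).

Definition Phi0 : PhiType q q' onemor0 := fun _ _ _ => 0.

Lemma onemor0_is1int : is1int P Phi0.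
Proof.
split; first by split=> [i a|//]; exact: unitmx1.
split.
  by move=> x; exists (fun _ _ => 0); split; apply: Two_eq_target0;
    [apply: mmulm0 | apply: mmul0m].
split; first by move=> phi; apply: Two_eq_target0; apply: mmul0m.
split; first by move=> x y; apply: Two_eq_target0; apply: mmul0m.
by apply: Two_eq_target0; apply: mmul0m.
Qed.

Definition Int0 : Int1 P q q' := MkInt1 onemor0_is1int.

Lemma Int1_R0_eq (Y : Int1 P q q') : mR (i_f Y) =2 nmat0 -> Y = Int0.
Proof.
case: Y => [[R S] Phi Y_int] /= R0.
have eR : R = nmat0 by do 2!apply: functional_extensionality => ?; apply: R0.
subst R.
have eS : S = fun _ _ => 1%:M.
  do 2!apply: functional_extensionality_dep => ?.
  by apply: mx_nrows0_eq; rewrite /matapp big1 // => k _; rewrite mul0n.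
subst S; have eP : Phi = Phi0.
  by apply: functional_extensionality_dep => x; apply: Two_eq_target0; apply: mmul0m.
by subst Phi; rewrite (proof_irrelevance _ Y_int onemor0_is1int).
Qed.

Lemma int_category_terminal_R0 :
  (forall Y : Int1 P q q', mR (i_f Y) =2 nmat0) -> int_category_terminal P q q'.
Proof.
move=> R0; split; first by exists Int0 => Y; apply: Int1_R0_eq.
move=> X Y; exists (fun _ _ => 0); split; last by move=> tau _; apply: Two_eq_target0.
by move=> x; apply: Two_eq_target0; apply: mmul0m; apply: R0.
Qed.

End OneIntertwiners.

Theorem mainTheorem10 (G : Special2Group) (P : Pfam) (n n' : nat)
    (q : quad G n) (q' : quad G n') :
  Pfam_ok P -> admissible q -> admissible q' ->
  (forall (f : onemor n' n) (Phi : PhiType q q' f), is1int P Phi ->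
     (* (i) R is (rho, rho')-invariant *)
     (forall x i' i, mR f (qrho q' x i') (qrho q x i) = mR f i' i) /\
     (* (ii) Sup(R) is contained in I(beta, beta') *)
     (forall i' i, Sup (mR f) (i', i) -> Ibb q q' i' i) /\
     (* in particular Sup(R) is a union of intertwining orbits *)
     (forall p, Sup (mR f) p ->
        (forall p', Morbit q q' p p' -> Sup (mR f) p') /\
        intertwining_orbit q q' p)) /\
  ((forall i' i, ~ Ibb q q' i' i) -> int_category_terminal P q q').
Proof.
(* Only invertibility and naturality of Φ enter. *)
move=> _ qadm q'adm.
have Sup_Ibb := is1int_Sup_Ibb qadm q'adm.
split=> [f Phi f_int | noIbb].
  split; first exact: is1int_invariant f_int.
  split; first exact: Sup_Ibb f_int.
  move=> p Rp; split=> [p'|[i' i] orb_p]; first exact: is1int_Sup_Morbit f_int Rp.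
  exact: Sup_Ibb f_int _ _ (is1int_Sup_Morbit f_int Rp orb_p).
apply: int_category_terminal_R0 => Y i' i.
case: (mR (i_f Y) i' i =P 0%N) => // RY.
by case: (noIbb i' i); apply: Sup_Ibb (i_ok Y) _ _ RY.
Qed.
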